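(* Let $\sigma\in C^1([0,\infty))$ be a nonnegative function and $u_*\in(0,\infty]$ such that $\sigma(s)=0$ for $s\ge u_*$, $\sigma(s)>0$ for $0\le s<u_*$, $\sigma$ is monotone decreasing on $[0,u_* )$, $\|\sigma\|_{C^1([0,u_*])}\le\mu<\infty$, and $\int_0^{u_*}\frac{ds}{\sigma(s)}=\infty$. Let $F(u):=\int_0^u\frac{ds}{\sigma(s)}$ for $u\in[0,u_* )$ (so $F$ maps $[0,u_* )$ onto $[0,\infty)$) and define $a(v):=\sigma(F^{-1}(v))$ for $v\in[0,\infty)$. Then $a$ is strictly positive and monotone decreasing, and for all $v\ge0$ and $y$ with $v+y\ge 0$, $$e^{-\mu|y|}\le\frac{a(v+y)}{a(v)}\le e^{\mu|y|}.$$ Moreover, for any $p\ge 2$, $$\frac{a(v)}{v^p}\int_0^v\frac{s^{p-2}}{a(s)}\,ds\longrightarrow 0\quad\text{as } v\to\infty.$$ *)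

From Stdlib Require Import Reals ClassicalEpsilon.
From Coquelicot Require Import Coquelicot.
Open Scope R_scope.

Definition has_deriv_nonneg (f f' : R -> R) (x : R) : Prop :=
  forall eps : R, 0 < eps -> exists delta : R, 0 < delta /\
    forall y : R, 0 <= y -> Rabs (y - x) < delta ->
      Rabs (f y - f x - f' x * (y - x)) <= eps * Rabs (y - x).

Definition cont_nonneg (g : R -> R) (x : R) : Prop :=
  forall eps : R, 0 < eps -> exists delta : R, 0 < delta /\
    forall y : R, 0 <= y -> Rabs (y - x) < delta -> Rabs (g y - g x) < eps.

Definition C1_nonneg (f f' : R -> R) : Prop :=
  forall x : R, 0 <= x -> has_deriv_nonneg f f' x /\ cont_nonneg f' x.

Definition Fsig (sigma : R -> R) (u : R) : R := RInt (fun s => / sigma s) 0 u.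

(* F^{-1}(v): the u in [0, u_* ) with F(u) = v (unique under the hypotheses). *)
Definition Finv (sigma : R -> R) (ustar : Rbar) (v : R) : R :=
  epsilon (inhabits 0)
    (fun u => 0 <= u /\ Rbar_lt u ustar /\ Fsig sigma u = v).

Definition a_of (sigma : R -> R) (ustar : Rbar) (v : R) : R :=
  sigma (Finv sigma ustar v).

(* Extending sigma to the left by sigma(0) turns F into a primitive of a positive
   continuous function on (-oo, u_* ), linear on (-oo, 0] and unbounded near u_*,
   hence an increasing homeomorphism onto R; so F^{-1}, and with it a, is continuous.
   Since (ln sigma + mu F)' = (sigma' + mu) / sigma >= 0, the function ln a(v) + mu v
   is nondecreasing while ln a is nonincreasing, whence |ln a(v+y) - ln a(v)| <= mu |y|.
   Finally s^(p-2) / a(s) is nondecreasing, so the integral up to v is at most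
   v^(p-1) / a(v) and the expression in the limit is squeezed between 0 and 1/v. *)

From Stdlib Require Import Reals ClassicalEpsilon Lra Ranalysis5.
From Coquelicot Require Import Coquelicot.
Open Scope R_scope.

Lemma continuous_eps_delta (f : R -> R) x :
  (forall eps, 0 < eps -> exists delta, 0 < delta /\
     forall y, Rabs (y - x) < delta -> Rabs (f y - f x) < eps) ->
  continuous f x.
Proof.
  intros H. apply continuity_pt_filterlim. intros eps Heps.
  destruct (H eps Heps) as [delta [Hdelta Hy]].
  exists delta. split; [exact Hdelta|]. intros y [_ Hyx]. exact (Hy y Hyx).
Qed.

Lemma exp_le_compat x y : x <= y -> exp x <= exp y.
Proof. intros [H|<-]; [left; apply exp_increasing, H | right; reflexivity]. Qed.

Lemma Rabs_Rmax0_sub x y : Rabs (Rmax 0 y - Rmax 0 x) <= Rabs (y - x).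
Proof.
  unfold Rmax; destruct (Rle_dec 0 y), (Rle_dec 0 x);
    unfold Rabs; repeat destruct Rcase_abs; lra.
Qed.

Lemma cont_nonneg_of_deriv f f' x :
  has_deriv_nonneg f f' x -> cont_nonneg f x.
Proof.
  intros Hd eps Heps.
  destruct (Hd 1 Rlt_0_1) as [d [Hd0 Hlin]].
  set (K := Rabs (f' x) + 1).
  assert (HK : 0 < K) by (unfold K; pose proof (Rabs_pos (f' x)); lra).
  exists (Rmin d (eps / K)). split; [apply Rmin_pos; [lra | apply Rdiv_lt_0_compat; lra]|].
  intros y Hy Hyx.
  assert (Hlip : Rabs (f y - f x) <= K * Rabs (y - x)).
  { specialize (Hlin y Hy (Rlt_le_trans _ _ _ Hyx (Rmin_l _ _))).
    replace (f y - f x) with ((f y - f x - f' x * (y - x)) + f' x * (y - x)) by ring.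
    eapply Rle_trans; [apply Rabs_triang|]. rewrite Rabs_mult. unfold K. lra. }
  apply (Rle_lt_trans _ _ _ Hlip).
  apply (Rmult_lt_compat_l K) in Hyx; [|exact HK].
  apply (Rlt_le_trans _ _ _ Hyx).
  apply (Rle_trans _ (K * (eps / K))); [apply Rmult_le_compat_l; [lra | apply Rmin_r]|].
  right. field. lra.
Qed.

Lemma has_deriv_nonneg_is_derive f f' x :
  0 < x -> has_deriv_nonneg f f' x -> is_derive f x (f' x).
Proof.
  intros Hx Hd. apply is_derive_Reals. intros eps Heps.
  destruct (Hd (eps / 2) ltac:(lra)) as [d [Hd0 Hlin]].
  assert (Hdx : 0 < Rmin d x) by (apply Rmin_pos; lra).
  exists (mkposreal _ Hdx). intros h Hh0 Hh. simpl in Hh.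
  pose proof (Rmin_l d x). pose proof (Rmin_r d x).
  assert (Hxh : 0 <= x + h) by (pose proof (Rle_abs (- h)); rewrite Rabs_Ropp in *; lra).
  specialize (Hlin (x + h) Hxh). replace (x + h - x) with h in Hlin by ring.
  specialize (Hlin ltac:(lra)).
  replace ((f (x + h) - f x) / h - f' x) with ((f (x + h) - f x - f' x * h) / h)
    by (field; exact Hh0).
  assert (0 < Rabs h) by (apply Rabs_pos_lt, Hh0).
  unfold Rdiv. rewrite Rabs_mult, Rabs_inv.
  apply (Rle_lt_trans _ (eps / 2 * Rabs h * / Rabs h)).
  - apply Rmult_le_compat_r; [left; apply Rinv_0_lt_compat|]; assumption.
  - field_simplify; lra.
Qed.

Definition clamp0 (f : R -> R) (z : R) : R := f (Rmax 0 z).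

Lemma continuous_clamp0 f :
  (forall x, 0 <= x -> cont_nonneg f x) -> forall x, continuous (clamp0 f) x.
Proof.
  intros Hf x. apply continuous_eps_delta. intros eps Heps.
  destruct (Hf (Rmax 0 x) (Rmax_l _ _) eps Heps) as [delta [Hdelta Hy]].
  exists delta. split; [exact Hdelta|]. intros y Hyx.
  apply Hy; [apply Rmax_l|]. eapply Rle_lt_trans; [apply Rabs_Rmax0_sub | exact Hyx].
Qed.

Lemma is_derive_clamp0 f f' x :
  0 < x -> has_deriv_nonneg f f' x -> is_derive (clamp0 f) x (f' x).
Proof.
  intros Hx Hd. apply (is_derive_ext_loc f).
  - exists (mkposreal x Hx). intros y Hy.
    apply Rabs_lt_between' in Hy. unfold clamp0. rewrite Rmax_right; simpl in *; lra.
  - exact (has_deriv_nonneg_is_derive f f' x Hx Hd).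
Qed.

(* Stdlib's [ln 0 = 0] makes [Rpower 0 q = 1]; the power function is redefined by 0
   on (-oo, 0] to make it continuous at 0. *)
Definition Rpower0 (q s : R) : R := if Rlt_dec 0 s then Rpower s q else 0.

Lemma continuous_Rpower0 q z : 0 < q -> 0 <= z -> continuous (Rpower0 q) z.
Proof.
  intros Hq [Hz | <-].
  - apply (continuous_ext_loc _ (fun s => exp (q * ln s))).
    + exists (mkposreal z Hz). intros y Hy.
      apply Rabs_lt_between' in Hy. unfold Rpower0. simpl in *.
      destruct (Rlt_dec 0 y); [reflexivity | lra].
    + apply continuous_exp_comp, (continuous_scal_r q ln), continuous_ln, Hz.
  - apply continuous_eps_delta. intros eps Heps.
    exists (Rpower eps (/ q)). split; [apply exp_pos|]. intros y Hy.
    unfold Rpower0. destruct (Rlt_dec 0 0); [lra|].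
    rewrite Rminus_0_r in *. destruct (Rlt_dec 0 y) as [Hy0|]; [|rewrite Rabs_R0; exact Heps].
    rewrite Rabs_right in * by (try apply Rle_ge, Rlt_le, exp_pos; lra).
    replace eps with (Rpower (Rpower eps (/ q)) q)
      by (rewrite Rpower_mult, Rinv_l, Rpower_1; lra).
    apply Rlt_Rpower_l; lra.
Qed.

Lemma ex_RInt_Rpower_div (g : R -> R) q v :
  0 <= q -> 0 <= v -> (forall z, 0 <= z <= v -> continuous g z /\ g z <> 0) ->
  ex_RInt (fun s => Rpower s q / g s) 0 v.
Proof.
  intros Hq Hv Hg.
  assert (Hpow : exists h : R -> R, (forall z, 0 <= z -> continuous h z) /\
                   forall s, 0 < s -> h s = Rpower s q).
  { destruct Hq as [Hq | <-].
    - exists (Rpower0 q). split; [intros; apply continuous_Rpower0; assumption|].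
      intros s Hs. unfold Rpower0. destruct (Rlt_dec 0 s); [reflexivity | lra].
    - exists (fun _ => 1). split; [intros; apply continuous_const|].
      intros s Hs. symmetry. apply Rpower_O, Hs. }
  destruct Hpow as [h [Hh_cont Hh_eq]].
  apply (ex_RInt_ext (fun s => h s * / g s)).
  - intros s Hs. rewrite Rmin_left, Rmax_right in Hs by exact Hv.
    rewrite Hh_eq by lra. reflexivity.
  - apply (@ex_RInt_continuous R_CompleteNormedModule). intros z Hz.
    rewrite Rmin_left, Rmax_right in Hz by exact Hv.
    destruct (Hg z Hz) as [Hgc Hg0].
    apply (continuous_mult h (fun s => / g s)); [apply Hh_cont; lra|].
    apply continuous_Rinv_comp; assumption.
Qed.

Section IncreasingInverse.

Variables (f : R -> R) (b : Rbar).
Hypothesis f_cont : forall x : R, Rbar_lt x b -> continuous f x.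
Hypothesis f_incr : forall x y, x < y -> Rbar_lt y b -> f x < f y.
Hypothesis f_onto : forall v, exists u : R, Rbar_lt u b /\ f u = v.

Definition inv_below (v : R) : R :=
  epsilon (inhabits 0) (fun u => Rbar_lt u b /\ f u = v).

Lemma inv_below_spec v : Rbar_lt (inv_below v) b /\ f (inv_below v) = v.
Proof. exact (epsilon_spec (inhabits 0) _ (f_onto v)). Qed.

Lemma inv_below_unique (u : R) : Rbar_lt u b -> inv_below (f u) = u.
Proof.
  intros Hu. destruct (inv_below_spec (f u)) as [Hb Hf].
  destruct (Rtotal_order (inv_below (f u)) u) as [H | [H | H]]; [| exact H |].
  - apply f_incr in H; [lra | exact Hu].
  - apply f_incr in H; [lra | exact Hb].
Qed.

Lemma inv_below_le v w : v <= w -> inv_below v <= inv_below w.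
Proof.
  intros Hvw. destruct (inv_below_spec v) as [Hv Hfv]. destruct (inv_below_spec w) as [_ Hfw].
  apply Rnot_lt_le. intros H. apply f_incr in H; [lra | exact Hv].
Qed.

Lemma inv_below_continuous v : continuous inv_below v.
Proof.
  apply continuity_pt_filterlim.
  destruct (inv_below_spec (v - 1)) as [Hlb Hflb].
  destruct (inv_below_spec (v + 1)) as [Hub Hfub].
  set (lb := inv_below (v - 1)) in *. set (ub := inv_below (v + 1)) in *.
  assert (Hlub : lb <= ub) by (apply inv_below_le; lra).
  apply (continuity_pt_recip_interv f inv_below lb ub).
  - destruct Hlub as [|E]; [assumption|]. rewrite E in Hflb. lra.
  - intros x y _ Hxy Hy. apply f_incr; [exact Hxy|].
    apply (Rbar_le_lt_trans _ ub); [exact Hy | exact Hub].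
  - intros x _ _. apply inv_below_spec.
  - intros x Hx Hx'. split;
      [rewrite <- (inv_below_unique lb Hlb) | rewrite <- (inv_below_unique ub Hub)];
      apply inv_below_le; assumption.
  - intros x Hx. apply continuity_pt_filterlim, f_cont.
    apply (Rbar_le_lt_trans _ ub); [apply Hx | exact Hub].
  - lra.
Qed.

End IncreasingInverse.

Section Primitive.

Variables (sigma dsigma : R -> R) (ustar : Rbar).
Hypothesis sigma_C1 : C1_nonneg sigma dsigma.
Hypothesis sigma_pos : forall s, 0 <= s -> Rbar_lt s ustar -> 0 < sigma s.
Hypothesis Fsig_unbounded : forall M : R, exists u0 : R, 0 <= u0 /\ Rbar_lt u0 ustar /\
  forall u, u0 <= u -> Rbar_lt u ustar -> M <= Fsig sigma u.

(* F extended to (-oo, 0] by x / sigma(0), so that it maps (-oo, u_* ) onto R. *)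
Definition Fext (x : R) : R := RInt (fun s => / clamp0 sigma s) 0 x.

Lemma ustar_pos : Rbar_lt 0 ustar.
Proof.
  destruct (Fsig_unbounded 0) as [u0 [Hu0 [Hu0s _]]].
  apply (Rbar_le_lt_trans _ u0); [exact Hu0 | exact Hu0s].
Qed.

Lemma continuous_clamp0_sigma (x : R) : continuous (clamp0 sigma) x.
Proof.
  apply continuous_clamp0. intros y Hy.
  exact (cont_nonneg_of_deriv _ _ _ (proj1 (sigma_C1 y Hy))).
Qed.

Lemma clamp0_sigma_pos (x : R) : Rbar_lt x ustar -> 0 < clamp0 sigma x.
Proof.
  intros Hx. apply sigma_pos; [apply Rmax_l|]. unfold Rmax.
  destruct (Rle_dec 0 x); [exact Hx | exact ustar_pos].
Qed.

Lemma continuous_inv_clamp0_sigma (x : R) :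
  Rbar_lt x ustar -> continuous (fun s => / clamp0 sigma s) x.
Proof.
  intros Hx. apply continuous_Rinv_comp.
  - apply continuous_clamp0_sigma.
  - apply Rgt_not_eq, clamp0_sigma_pos, Hx.
Qed.

Lemma Fext_derive (x : R) : Rbar_lt x ustar -> is_derive Fext x (/ clamp0 sigma x).
Proof.
  intros Hx. apply (is_derive_RInt (fun s => / clamp0 sigma s) Fext 0 x);
    [|exact (continuous_inv_clamp0_sigma x Hx)].
  destruct (Rbar_lt_locally m_infty ustar x I Hx) as [d Hd].
  exists d. intros y Hy. apply (@RInt_correct R_CompleteNormedModule).
  apply (@ex_RInt_continuous R_CompleteNormedModule). intros z Hz.
  apply continuous_inv_clamp0_sigma.
  apply (Rbar_le_lt_trans _ (Rmax 0 y)); [apply Hz|].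
  unfold Rmax. destruct (Rle_dec 0 y); [apply Hd, Hy | exact ustar_pos].
Qed.

Lemma Fext_continuous (x : R) : Rbar_lt x ustar -> continuous Fext x.
Proof.
  intros Hx. apply (@ex_derive_continuous R_AbsRing R_NormedModule).
  eexists. exact (Fext_derive x Hx).
Qed.

Lemma Fext_incr (x y : R) : x < y -> Rbar_lt y ustar -> Fext x < Fext y.
Proof.
  intros Hxy Hy. apply (incr_function Fext m_infty ustar (fun s => / clamp0 sigma s));
    [intros z _ Hz; exact (Fext_derive z Hz)
    |intros z _ Hz; apply Rlt_gt, Rinv_0_lt_compat, clamp0_sigma_pos, Hz
    |exact I | exact Hxy | exact Hy].
Qed.

Lemma Fext_Fsig (u : R) : 0 <= u -> Fext u = Fsig sigma u.
Proof.
  intros Hu. apply RInt_ext. intros x Hx.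
  rewrite Rmin_left, Rmax_right in Hx by exact Hu.
  unfold clamp0. rewrite Rmax_right by lra. reflexivity.
Qed.

Lemma Fext_nonpos (x : R) : x <= 0 -> Fext x = x / sigma 0.
Proof.
  intros Hx. unfold Fext. rewrite (RInt_ext _ (fun _ => / sigma 0)).
  - rewrite RInt_const. unfold scal; simpl; unfold mult; simpl. unfold Rdiv. ring.
  - intros s Hs. rewrite Rmin_right, Rmax_left in Hs by exact Hx.
    unfold clamp0. rewrite Rmax_left by lra. reflexivity.
Qed.

Lemma Fext_onto (v : R) : exists u : R, Rbar_lt u ustar /\ Fext u = v.
Proof.
  pose proof (sigma_pos 0 (Rle_refl 0) ustar_pos) as Hs0.
  destruct (Fsig_unbounded v) as [u0 [Hu0 [Hu0s Hv]]].
  specialize (Hv u0 (Rle_refl u0) Hu0s). rewrite <- Fext_Fsig in Hv by exact Hu0.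
  set (lb := - (Rabs v + 1) * sigma 0).
  assert (Hlb : Fext lb = - (Rabs v + 1)).
  { unfold lb. rewrite Fext_nonpos; [field; lra|].
    pose proof (Rabs_pos v). nra. }
  pose proof (Rle_abs (- v)). rewrite Rabs_Ropp in *.
  destruct (f_interv_is_interv Fext lb u0 v) as [u [Hu HFu]].
  - unfold lb. pose proof (Rabs_pos v). nra.
  - lra.
  - intros x Hx. apply continuity_pt_filterlim, Fext_continuous.
    apply (Rbar_le_lt_trans _ u0); [apply Hx | exact Hu0s].
  - exists u. split; [apply (Rbar_le_lt_trans _ u0); [apply Hu | exact Hu0s] | exact HFu].
Qed.

Definition Fext_inv : R -> R := inv_below Fext ustar.

Lemma Fext_inv_spec (v : R) : Rbar_lt (Fext_inv v) ustar /\ Fext (Fext_inv v) = v.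
Proof. exact (inv_below_spec Fext ustar Fext_onto v). Qed.

Lemma Fext_inv_nonneg (v : R) : 0 <= v -> 0 <= Fext_inv v.
Proof.
  intros Hv. destruct (Fext_inv_spec v) as [_ HF]. apply Rnot_lt_le. intros H.
  apply Fext_incr in H; [|exact ustar_pos]. unfold Fext at 2 in H. rewrite RInt_point in H.
  change (Fext (Fext_inv v) < 0) in H. lra.
Qed.

Lemma Finv_eq_Fext_inv (v : R) : 0 <= v -> Finv sigma ustar v = Fext_inv v.
Proof.
  intros Hv. destruct (Fext_inv_spec v) as [Hlt HFv].
  assert (Hex : exists u, 0 <= u /\ Rbar_lt u ustar /\ Fsig sigma u = v).
  { exists (Fext_inv v). rewrite <- Fext_Fsig by exact (Fext_inv_nonneg v Hv).
    split; [exact (Fext_inv_nonneg v Hv) | split; assumption]. }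
  destruct (epsilon_spec (inhabits 0) _ Hex) as [H0 [Hs HF]].
  fold (Finv sigma ustar v) in H0, Hs, HF. rewrite <- Fext_Fsig in HF by exact H0.
  rewrite <- (inv_below_unique Fext ustar Fext_incr Fext_onto _ Hs), HF. reflexivity.
Qed.

Lemma ln_sigma_add_Fext_le (mu : R)
  (dsigma_ge : forall t, 0 <= t -> Rbar_lt t ustar -> - mu <= dsigma t) (u u' : R) :
  0 <= u -> u <= u' -> Rbar_lt u' ustar ->
  ln (sigma u) + mu * Fext u <= ln (sigma u') + mu * Fext u'.
Proof.
  intros Hu Huu' Hu'.
  assert (Hbelow : forall x : R, x <= u' -> Rbar_lt x ustar)
    by (intros x Hx; apply (Rbar_le_lt_trans _ u'); [exact Hx | exact Hu']).
  set (phi := fun t => ln (clamp0 sigma t) + mu * Fext t).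
  destruct (MVT_gen phi u u' (fun t => (dsigma t + mu) / clamp0 sigma t)) as [c [Hc Hmvt]].
  - intros x Hx. rewrite Rmin_left, Rmax_right in Hx by exact Huu'.
    pose proof (clamp0_sigma_pos x (Hbelow x ltac:(lra))) as Hsx.
    pose proof (is_derive_comp ln (clamp0 sigma) x _ _ (is_derive_ln _ Hsx)
      (is_derive_clamp0 sigma dsigma x ltac:(lra) (proj1 (sigma_C1 x ltac:(lra))))) as Hln.
    pose proof (is_derive_scal Fext x mu _ (Fext_derive x (Hbelow x ltac:(lra)))) as HF.
    replace ((dsigma x + mu) / clamp0 sigma x)
      with (plus (scal (dsigma x) (/ clamp0 sigma x)) (mu * / clamp0 sigma x))
      by (unfold plus, scal; simpl; unfold mult; simpl; field; lra).
    exact (is_derive_plus _ _ x _ _ Hln HF).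
  - intros x Hx. rewrite Rmin_left, Rmax_right in Hx by exact Huu'.
    apply continuity_pt_filterlim, (continuous_plus (fun t => ln (clamp0 sigma t))).
    + apply (continuous_comp (clamp0 sigma) ln); [apply continuous_clamp0_sigma|].
      apply continuous_ln, clamp0_sigma_pos, Hbelow. lra.
    + apply (continuous_scal_r mu Fext), Fext_continuous, Hbelow. lra.
  - rewrite Rmin_left, Rmax_right in Hc by exact Huu'.
    assert (Hslope : 0 <= (dsigma c + mu) / clamp0 sigma c).
    { apply Rmult_le_pos.
      - pose proof (dsigma_ge c ltac:(lra) (Hbelow c ltac:(lra))). lra.
      - left. apply Rinv_0_lt_compat, clamp0_sigma_pos, Hbelow. lra. }
    assert (phi u <= phi u') by (pose proof (Rmult_le_pos _ (u' - u) Hslope ltac:(lra)); lra).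
    unfold phi, clamp0 in *. rewrite !Rmax_right in * by lra. assumption.
Qed.

Lemma a_of_eq (v : R) : 0 <= v -> a_of sigma ustar v = sigma (Fext_inv v).
Proof. intros Hv. unfold a_of. rewrite Finv_eq_Fext_inv by exact Hv. reflexivity. Qed.

Lemma a_of_pos (v : R) : 0 <= v -> 0 < a_of sigma ustar v.
Proof.
  intros Hv. rewrite a_of_eq by exact Hv.
  apply sigma_pos; [apply Fext_inv_nonneg, Hv | apply Fext_inv_spec].
Qed.

Lemma a_of_decr
  (sigma_decr : forall s t, 0 <= s -> s <= t -> Rbar_lt t ustar -> sigma t <= sigma s)
  (v w : R) : 0 <= v -> v <= w -> a_of sigma ustar w <= a_of sigma ustar v.
Proof.
  intros Hv Hvw. rewrite !a_of_eq by lra.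
  apply sigma_decr; [apply Fext_inv_nonneg, Hv | | apply Fext_inv_spec].
  exact (inv_below_le Fext ustar Fext_incr Fext_onto v w Hvw).
Qed.

Lemma ln_a_of_add_mu_le (mu : R)
  (dsigma_ge : forall t, 0 <= t -> Rbar_lt t ustar -> - mu <= dsigma t) (v w : R) :
  0 <= v -> v <= w ->
  ln (a_of sigma ustar v) + mu * v <= ln (a_of sigma ustar w) + mu * w.
Proof.
  intros Hv Hvw. rewrite !a_of_eq by lra.
  pose proof (ln_sigma_add_Fext_le mu dsigma_ge (Fext_inv v) (Fext_inv w) (Fext_inv_nonneg v Hv)
    (inv_below_le Fext ustar Fext_incr Fext_onto v w Hvw) (proj1 (Fext_inv_spec w))) as H.
  rewrite !(proj2 (Fext_inv_spec _)) in H. exact H.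
Qed.

Lemma ex_RInt_Rpower_div_a_of (q v : R) :
  0 <= q -> 0 <= v -> ex_RInt (fun s => Rpower s q / a_of sigma ustar s) 0 v.
Proof.
  intros Hq Hv. apply (ex_RInt_ext (fun s => Rpower s q / clamp0 sigma (Fext_inv s))).
  - intros s Hs. rewrite Rmin_left, Rmax_right in Hs by exact Hv.
    unfold clamp0. rewrite Rmax_right, a_of_eq by (try apply Fext_inv_nonneg; lra). reflexivity.
  - apply ex_RInt_Rpower_div; [exact Hq | exact Hv |]. intros z _. split.
    + apply (continuous_comp Fext_inv (clamp0 sigma)); [|apply continuous_clamp0_sigma].
      exact (inv_below_continuous Fext ustar Fext_continuous Fext_incr Fext_onto z).
    + apply Rgt_not_eq, clamp0_sigma_pos, Fext_inv_spec.
Qed.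

End Primitive.

Lemma exp_ratio_bounds (a : R -> R) (mu : R) :
  (forall v, 0 <= v -> 0 < a v) ->
  (forall v w, 0 <= v -> v <= w -> a w <= a v) ->
  (forall v w, 0 <= v -> v <= w -> ln (a v) + mu * v <= ln (a w) + mu * w) ->
  forall v y, 0 <= v -> 0 <= v + y ->
    exp (- mu * Rabs y) <= a (v + y) / a v /\ a (v + y) / a v <= exp (mu * Rabs y).
Proof.
  intros Hpos Hdecr Hlip v y Hv Hvy.
  assert (Hd : - mu * Rabs y <= ln (a (v + y)) - ln (a v) <= mu * Rabs y).
  { destruct (Rle_or_lt 0 y) as [Hy | Hy].
    - pose proof (Hlip v (v + y) Hv ltac:(lra)).
      pose proof (ln_le _ _ (Hpos (v + y) Hvy) (Hdecr v (v + y) Hv ltac:(lra))).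
      rewrite Rabs_right by lra. lra.
    - pose proof (Hlip (v + y) v Hvy ltac:(lra)).
      pose proof (ln_le _ _ (Hpos v Hv) (Hdecr (v + y) v Hvy ltac:(lra))).
      rewrite Rabs_left by lra. lra. }
  pose proof (Hpos v Hv). pose proof (Hpos (v + y) Hvy).
  rewrite <- (exp_ln (a (v + y) / a v)), ln_div by (try apply Rdiv_lt_0_compat; lra).
  split; apply exp_le_compat; lra.
Qed.

Lemma is_lim_weighted_integral (a : R -> R) (p : R) :
  2 <= p ->
  (forall v, 0 < v -> 0 < a v) ->
  (forall v w, 0 < v -> v <= w -> a w <= a v) ->
  (forall v, 0 < v -> ex_RInt (fun s => Rpower s (p - 2) / a s) 0 v) ->
  is_lim (fun v => a v / Rpower v p * RInt (fun s => Rpower s (p - 2) / a s) 0 v)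
    p_infty 0.
Proof.
  intros Hp Hpos Hdecr Hint.
  apply (is_lim_le_le_loc (fun _ => 0) (fun v => / v)).
  - exists 0. intros v Hv.
    pose proof (Hpos v Hv) as Hav.
    assert (Hpow : 0 < Rpower v (p - 2)) by apply exp_pos.
    assert (Hf : forall s, 0 < s < v -> 0 <= Rpower s (p - 2) / a s <= Rpower v (p - 2) / a v).
    { intros s Hs. pose proof (Hpos s (proj1 Hs)). split.
      - apply Rdiv_le_0_compat; [left; apply exp_pos | lra].
      - apply Rmult_le_compat; [left; apply exp_pos | left; apply Rinv_0_lt_compat; lra
        | apply Rle_Rpower_l; lra | apply Rinv_le_contravar, Hdecr; lra]. }
    assert (HI0 : 0 <= RInt (fun s => Rpower s (p - 2) / a s) 0 v)
      by (apply RInt_ge_0; [lra | apply Hint, Hv | intros s Hs; apply Hf, Hs]).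
    assert (HI1 : RInt (fun s => Rpower s (p - 2) / a s) 0 v <= v * (Rpower v (p - 2) / a v)).
    { replace (v * _) with (RInt (fun _ => Rpower v (p - 2) / a v) 0 v)
        by (rewrite RInt_const; unfold scal; simpl; unfold mult; simpl; ring).
      apply RInt_le; [lra | apply Hint, Hv | apply ex_RInt_const | intros s Hs; apply Hf, Hs]. }
    assert (Hvp : Rpower v p = Rpower v (p - 2) * v ^ 2).
    { replace p with ((p - 2) + INR 2) at 1 by (simpl; ring).
      rewrite Rpower_plus, Rpower_pow by exact Hv. reflexivity. }
    assert (Hc : 0 <= a v / Rpower v p).
    { rewrite Hvp. apply Rdiv_le_0_compat; [lra|]. apply Rmult_lt_0_compat; [exact Hpow | nra]. }
    split; [apply Rmult_le_pos; assumption|].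
    apply (Rle_trans _ (a v / Rpower v p * (v * (Rpower v (p - 2) / a v)))).
    + apply Rmult_le_compat_l; assumption.
    + right. rewrite Hvp. field. lra.
  - apply is_lim_const.
  - replace (Finite 0) with (Rbar_inv p_infty) by reflexivity.
    apply is_lim_inv; [apply is_lim_id | discriminate].
Qed.

Theorem lemma2p3
  (sigma dsigma : R -> R) (ustar : Rbar) (mu : R)
  (Hc1 : C1_nonneg sigma dsigma)
  (Hnn : forall s, 0 <= s -> 0 <= sigma s)
  (Hus : Rbar_lt (Finite 0) ustar)
  (Hzero : forall s, 0 <= s -> Rbar_le ustar (Finite s) -> sigma s = 0)
  (Hpos : forall s, 0 <= s -> Rbar_lt (Finite s) ustar -> 0 < sigma s)
  (Hdec : forall s t, 0 <= s -> s <= t -> Rbar_lt (Finite t) ustar ->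
          sigma t <= sigma s)
  (Hnorm : forall s t, 0 <= s -> Rbar_le (Finite s) ustar ->
           0 <= t -> Rbar_le (Finite t) ustar ->
           Rabs (sigma s) + Rabs (dsigma t) <= mu)
  (Hdiv : forall M : R, exists u0 : R, 0 <= u0 /\ Rbar_lt (Finite u0) ustar /\
          forall u, u0 <= u -> Rbar_lt (Finite u) ustar -> M <= Fsig sigma u) :
  (forall v, 0 <= v -> 0 < a_of sigma ustar v) /\
  (forall v w, 0 <= v -> v <= w -> a_of sigma ustar w <= a_of sigma ustar v) /\
  (forall v y, 0 <= v -> 0 <= v + y ->
     exp (- mu * Rabs y) <= a_of sigma ustar (v + y) / a_of sigma ustar v /\
     a_of sigma ustar (v + y) / a_of sigma ustar v <= exp (mu * Rabs y)) /\
  (forall p : R, 2 <= p ->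
     is_lim (fun v => a_of sigma ustar v / Rpower v p *
                      RInt (fun s => Rpower s (p - 2) / a_of sigma ustar s) 0 v)
            p_infty 0).
Proof.
  assert (Hdsigma : forall t, 0 <= t -> Rbar_lt t ustar -> - mu <= dsigma t).
  { intros t Ht Hts. pose proof (Rbar_lt_le _ _ Hts) as Hts'.
    pose proof (Hnorm t t Ht Hts' Ht Hts').
    pose proof (Rabs_pos (sigma t)). pose proof (Rabs_maj2 (dsigma t)). lra. }
  pose proof (a_of_pos sigma dsigma ustar Hc1 Hpos Hdiv) as Hapos.
  pose proof (a_of_decr sigma dsigma ustar Hc1 Hpos Hdiv Hdec) as Hadecr.
  split; [exact Hapos|]. split; [exact Hadecr|]. split.
  - apply exp_ratio_bounds; [exact Hapos | exact Hadecr |].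
    exact (ln_a_of_add_mu_le sigma dsigma ustar Hc1 Hpos Hdiv mu Hdsigma).
  - intros p Hp. apply is_lim_weighted_integral; [exact Hp | | |].
    + intros v Hv. apply Hapos. lra.
    + intros v w Hv Hvw. apply Hadecr; lra.
    + intros v Hv. apply (ex_RInt_Rpower_div_a_of sigma dsigma ustar Hc1 Hpos Hdiv); lra.
Qed.
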